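(* Let $\mathcal{A}$ be a safe GTA without renamings with clock set $X=X_F\uplus X_H$, and let $M\in\mathbb{N}$ be such that every finite constant $c$ appearing in a guard of $\mathcal{A}$ satisfies $|c|\le M$. Then $\approx_M$ is a time-abstract bisimulation: for all valuations $v_1\approx_M v_2$, (a) for every $\delta_1\ge 0$ such that $v_1+\delta_1$ is a valuation there is $\delta_2\ge 0$ such that $v_2+\delta_2$ is a valuation and $v_1+\delta_1\approx_M v_2+\delta_2$; and (b) for every transition $t$ of $\mathcal{A}$ and state $q$, if $(q,v_1)\xrightarrow{t}(q',v_1')$ then there is $v_2'$ with $(q,v_2)\xrightarrow{t}(q',v_2')$ and $v_1'\approx_M v_2'$ (and symmetrically with the roles of $v_1,v_2$ exchanged).
   Context: Clocks, valuations, constraints: $X=X_F\uplus X_H$ finite, future clocks $X_F$, history clocks $X_H$, plus constant clock $0$. $\overline{\mathbb{R}}=\mathbb{R}\cup\{\pm\infty\}$ with $(+\infty)+\alpha=+\infty$, $(-\infty)+\beta=-\infty$ for $\beta\ne+\infty$, $-(\pm\infty)=\mp\infty$. A valuation $v:X\cup\{0\}\to\overline{\mathbb{R}}$ has $v(0)=0$, history clocks in $\mathbb{R}_{\ge0}\cup\{+\infty\}$, future clocks in $\mathbb{R}_{\le0}\cup\{-\infty\}$. Constraints are conjunctions of $x-y\triangleleft c$ ($x,y\in X\cup\{0\}$, ${\triangleleft}\in\{<,\le\}$, $c\in\mathbb{Z}\cup\{\pm\infty\}$), $v\models x-y\triangleleft c$ iff $v(x)-v(y)\triangleleft c$. $v+\delta$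 adds $\delta$ to every clock; $[R]v$ ($R\subseteq X$) is the set of $v'$ with $v'(x)=0$ for $x\in R\cap X_H$, $v'(x)=v(x)$ for $x\notin R$, arbitrary for $x\in R\cap X_F$. A GTA without renamings $\mathcal{A}=(Q,\Sigma,X,\Delta,\mathcal{I},Q_f)$ has transitions $(q,a,\mathsf{prog},q')$ where $\mathsf{prog}$ is a sequence of guards $g$ (with $v\xrightarrow{g}v$ iff $v\models g$) and changes $[R]$ (with $v\xrightarrow{[R]}v'$ iff $v'\in[R]v$); $(q,v)\xrightarrow{t}(q',v')$ iff $t=(q,a,\mathsf{prog},q')$ and $v\xrightarrow{\mathsf{prog}}v'$. Safety: with $X_D$ the future clocks occurring in guards $x-y\triangleleft c$ with $x,y\in X_F$, every program checks each clock of $X_D$ to be $0$ or $-\infty$ before releasing it, and initial guards force history clocks to $0$ or $+\infty$. For $\alpha\in\mathbb{R}$, $\lfloor\alpha\rfloor$ is its integer part and $\{\alpha\}=\alpha-\lfloor\alpha\rfloor$. Equivalence $\approx_M$: $v_1\approx_M v_2$ iff for all clocks $x,y$: (1) $v_1(x)\triangleleft c$ iff $v_2(x)\triangleleft c$ for all ${\triangleleft}\in\{<,\le\}$ and all $c\in\{-\infty,+\infty\}$ or $c\in\mathbb{Z}$ with $c\le M$; (2) $v_1\models x-y\triangleleft c$ iff $v_2\models x-y\triangleleft c$ for all ${\triangleleft}\in\{<,\le\}$ and $c\in\{\pm\infty\}$ or $c\in\mathbb{Z}$ with $|c|\le M$; (3) if $-\infty<v_1(x),v_1(y)\le M$ then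 $\{v_1(x)\}\le\{v_1(y)\}$ iff $\{v_2(x)\}\le\{v_2(y)\}$. *)

From Stdlib Require Import Reals ZArith List.
Open Scope R_scope.

Inductive ER := Fin (r : R) | PInf | NInf.

Definition eadd (a b : ER) : ER :=
  match a, b with
  | PInf, _ | _, PInf => PInf
  | NInf, _ | _, NInf => NInf
  | Fin r, Fin s => Fin (r + s)
  end.

Definition eopp (a : ER) : ER :=
  match a with Fin r => Fin (- r) | PInf => NInf | NInf => PInf end.

Definition esub (a b : ER) : ER := eadd a (eopp b).

Definition ele (a b : ER) : Prop :=
  match a, b with
  | NInf, _ => True
  | _, PInf => True
  | Fin r, Fin s => r <= s
  | _, _ => False
  end.

Definition elt (a b : ER) : Prop := ele a b /\ a <> b.

Definition ecmp (strict : bool) (a b : ER) : Prop :=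
  if strict then elt a b else ele a b.

Inductive bnd := BZ (z : Z) | BPInf | BNInf.

Definition bnd_ER (c : bnd) : ER :=
  match c with BZ z => Fin (IZR z) | BPInf => PInf | BNInf => NInf end.

(** * Clocks and valuations.
    C is the clock set X; [isF x = true] iff x ∈ X_F (future clock),
    otherwise x ∈ X_H (history clock).  The constant clock 0 is [None]. *)
Section Clocks.
Variable C : Type.
Variable isF : C -> bool.

Definition valuation := C -> ER.

Definition val (v : valuation) (x : option C) : ER :=
  match x with None => Fin 0 | Some c => v c end.

Definition is_valuation (v : valuation) : Prop :=
  forall x : C,
    if isF x then (v x = NInf \/ exists r, v x = Fin r /\ r <= 0)
    else (v x = PInf \/ exists r, v x = Fin r /\ 0 <= r).

(** atomic constraint  x - y ◁ c *)
Record atom := mkAtom { ax : option C; ay : option C; astrict : bool; ac : bnd }.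

Definition guard := list atom.

Definition sat_atom (v : valuation) (a : atom) : Prop :=
  ecmp (astrict a) (esub (val v (ax a)) (val v (ay a))) (bnd_ER (ac a)).

Definition sat (v : valuation) (g : guard) : Prop := Forall (sat_atom v) g.

Definition delay (v : valuation) (d : R) : valuation := fun x => eadd (v x) (Fin d).

Definition in_change (Rs : list C) (v v' : valuation) : Prop :=
  is_valuation v' /\
  forall x, (In x Rs -> isF x = false -> v' x = Fin 0) /\
            (~ In x Rs -> v' x = v x).

Inductive instr := IGuard (g : guard) | IChange (Rs : list C).
Definition program := list instr.

Fixpoint prog_sem (p : program) (v v' : valuation) : Prop :=
  match p with
  | nil => v' = v
  | IGuard g :: p' => sat v g /\ prog_sem p' v v'
  | IChange Rs :: p' => exists w, in_change Rs v w /\ prog_sem p' w v'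
  end.

End Clocks.

Arguments mkAtom {C}.
Arguments ax {C}.
Arguments ay {C}.
Arguments astrict {C}.
Arguments ac {C}.
Arguments IGuard {C}.
Arguments IChange {C}.

Record transition (Q Sigma C : Type) := mkTrans
  { tsrc : Q; tlab : Sigma; tprog : program C; ttgt : Q }.
Arguments tsrc {Q Sigma C}.
Arguments tlab {Q Sigma C}.
Arguments tprog {Q Sigma C}.
Arguments ttgt {Q Sigma C}.

Record GTA (Q Sigma C : Type) := mkGTA
  { gta_trans : list (transition Q Sigma C);
    gta_init : list (Q * guard C);
    gta_final : Q -> Prop }.
Arguments gta_trans {Q Sigma C}.
Arguments gta_init {Q Sigma C}.
Arguments gta_final {Q Sigma C}.

Section Semantics.
Context {Q Sigma C : Type} (isF : C -> bool).

Definition gstep (t : transition Q Sigma C) (q : Q) (v : valuation C)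
    (q' : Q) (v' : valuation C) : Prop :=
  tsrc t = q /\ ttgt t = q' /\ prog_sem C isF (tprog t) v v'.

Definition guard_of (A : GTA Q Sigma C) (g : guard C) : Prop :=
  (exists q, In (q, g) (gta_init A)) \/
  (exists t, In t (gta_trans A) /\ In (IGuard g) (tprog t)).

Definition is_future (x : option C) : Prop :=
  match x with Some c => isF c = true | None => False end.

Definition in_XD (A : GTA Q Sigma C) (z : C) : Prop :=
  exists g a, guard_of A g /\ In a g /\ is_future (ax a) /\ is_future (ay a) /\
              (ax a = Some z \/ ay a = Some z).

Definition safe (A : GTA Q Sigma C) : Prop :=
  (forall t, In t (gta_trans A) ->
     forall p1 Rs p2, tprog t = p1 ++ IChange Rs :: p2 ->
     forall v w, is_valuation C isF v -> prog_sem C isF p1 v w ->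
     forall z, In z Rs -> in_XD A z -> isF z = true ->
       w z = Fin 0 \/ w z = NInf) /\
  (forall q g, In (q, g) (gta_init A) ->
     forall v, is_valuation C isF v -> sat C v g ->
     forall x, isF x = false -> v x = Fin 0 \/ v x = PInf).

Definition consts_bounded (A : GTA Q Sigma C) (M : nat) : Prop :=
  forall g a z, guard_of A g -> In a g -> ac a = BZ z ->
    (Z.abs z <= Z.of_nat M)%Z.

End Semantics.

Definition bnd_le_M (M : nat) (c : bnd) : Prop :=
  match c with BZ z => (z <= Z.of_nat M)%Z | _ => True end.

Definition bnd_abs_le_M (M : nat) (c : bnd) : Prop :=
  match c with BZ z => (Z.abs z <= Z.of_nat M)%Z | _ => True end.

(** {α} = α - ⌊α⌋   (Stdlib: frac_part r = r - IZR (Int_part r), Int_part = floor) *)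
Definition approxM {C : Type} (M : nat) (v1 v2 : valuation C) : Prop :=
  (forall (x : option C) (s : bool) (c : bnd), bnd_le_M M c ->
     (ecmp s (val C v1 x) (bnd_ER c) <-> ecmp s (val C v2 x) (bnd_ER c))) /\
  (forall (x y : option C) (s : bool) (c : bnd), bnd_abs_le_M M c ->
     (ecmp s (esub (val C v1 x) (val C v1 y)) (bnd_ER c) <->
      ecmp s (esub (val C v2 x) (val C v2 y)) (bnd_ER c))) /\
  (forall (x y : option C) (r1 r2 s1 s2 : R),
     val C v1 x = Fin r1 -> val C v1 y = Fin r2 ->
     r1 <= INR M -> r2 <= INR M ->
     val C v2 x = Fin s1 -> val C v2 y = Fin s2 ->
     (frac_part r1 <= frac_part r2 <-> frac_part s1 <= frac_part s2)).

From Stdlib Require Import Reals RList ZArith List Lra Lia Classical ClassicalEpsilon FunctionalExtensionality.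
Open Scope R_scope.

(** Under [v1 ≈_M v2] every clock is infinite in both, above [M] in both, or a real [r <= M]
    whose integer part and integrality are shared; the fractional parts of the clocks [<= M]
    are in the same order; and all differences satisfy the same constraints with constants
    bounded by [M].  A delay [d1 = n - u] ([n] integer, [0 <= u < 1]) of [v1] is matched by
    [n - w], and releasing a clock to [r <= 0] in [v1] by releasing it to [⌊r⌋ + w] in [v2],
    where [w] sits among the fractional parts of [v2] as [u] (resp. [{r}]) sits among those
    of [v1]: a finite order pattern always extends by one point.  Guards are preserved since
    their constants are bounded by [M]. *)

Lemma frac_part_bounds r : 0 <= frac_part r < 1.
Proof. destruct (base_fp r); lra. Qed.

Lemma Int_frac_part_of_decomp r z f :
  0 <= f < 1 -> r = IZR z + f -> Int_part r = z /\ frac_part r = f.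
Proof. intros Hf Er. destruct (Int_part_frac_part_spec r z f Hf Er). auto. Qed.

Lemma Rlt_IZR_Int_part r z : r < IZR z <-> (Int_part r < z)%Z.
Proof.
  pose proof (Rplus_Int_part_frac_part r). pose proof (frac_part_bounds r).
  split; intro H'.
  - apply lt_IZR. lra.
  - assert (IZR (Int_part r) + 1 <= IZR z) by (rewrite <- plus_IZR; apply IZR_le; lia).
    lra.
Qed.

Lemma Rle_IZR_Int_part r z :
  r <= IZR z <-> (Int_part r < z)%Z \/ (Int_part r = z /\ frac_part r = 0).
Proof.
  pose proof (Rplus_Int_part_frac_part r). pose proof (frac_part_bounds r).
  rewrite <- Rlt_IZR_Int_part. split.
  - intros [Hlt|Heq]; [now left|right].
    subst r. apply (Int_frac_part_of_decomp _ z 0); lra.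
  - intros [Hlt|[<- Hf]]; lra.
Qed.

Definition int_cmp_agree (P : Z -> Prop) (r s : R) : Prop :=
  forall z, P z -> (r <= IZR z <-> s <= IZR z) /\ (r < IZR z <-> s < IZR z).

Lemma int_cmp_agree_opp (P : Z -> Prop) r s :
  int_cmp_agree (fun z => P (- z)%Z) r s -> int_cmp_agree P (- r) (- s).
Proof.
  intros H z Hz. rewrite <- (Z.opp_involutive z) in Hz.
  destruct (H (- z)%Z Hz) as [Hle Hlt]. rewrite opp_IZR in Hle, Hlt.
  split; split; intro Hc.
  - destruct (Rlt_dec s (- IZR z)) as [h|h]; [apply Hlt in h|]; lra.
  - destruct (Rlt_dec r (- IZR z)) as [h|h]; [apply Hlt in h|]; lra.
  - destruct (Rle_dec s (- IZR z)) as [h|h]; [apply Hle in h|]; lra.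
  - destruct (Rle_dec r (- IZR z)) as [h|h]; [apply Hle in h|]; lra.
Qed.

Definition region_eq (r s : R) : Prop :=
  Int_part r = Int_part s /\ (frac_part r = 0 <-> frac_part s = 0).

Lemma region_eq_refl r : region_eq r r.
Proof. split; tauto. Qed.

Lemma region_eq_int_cmp (P : Z -> Prop) r s : region_eq r s -> int_cmp_agree P r s.
Proof.
  intros [Eint Efrac] z _. rewrite !Rle_IZR_Int_part, !Rlt_IZR_Int_part, Eint. tauto.
Qed.

Lemma region_eq_of_int_cmp (K : Z) r s :
  int_cmp_agree (fun z => (z <= K)%Z) r s -> r <= IZR K -> region_eq r s.
Proof.
  intros H HrK.
  assert (HsK : s <= IZR K) by (apply (H K (Z.le_refl K)); exact HrK).
  assert (HintK : forall t, t <= IZR K -> (Int_part t <= K)%Z).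
  { intros t Ht. pose proof (proj1 (Rle_IZR_Int_part t K) Ht). lia. }
  assert (Hint : forall z, (z <= K)%Z -> ((Int_part r < z)%Z <-> (Int_part s < z)%Z)).
  { intros z Hz. rewrite <- !Rlt_IZR_Int_part. apply H, Hz. }
  assert (Eint : Int_part r = Int_part s).
  { pose proof (Hint (Int_part r) (HintK r HrK)).
    pose proof (Hint (Int_part s) (HintK s HsK)). lia. }
  split; [exact Eint|].
  destruct (H (Int_part r) (HintK r HrK)) as [Hle _].
  rewrite !Rle_IZR_Int_part, <- Eint in Hle.
  pose proof (Z.lt_irrefl (Int_part r)). tauto.
Qed.

Definition cmp_agree (a a' b b' : R) : Prop := (a <= a' <-> b <= b') /\ (a' <= a <-> b' <= b).

Lemma cmp_agree_swap a a' b b' : cmp_agree a a' b b' -> cmp_agree a' a b' b.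
Proof. unfold cmp_agree. tauto. Qed.

Lemma frac_part_shift a n u :
  0 <= u < 1 ->
  frac_part (a + (IZR n - u)) = frac_part a - u + (if Rle_dec u (frac_part a) then 0 else 1).
Proof.
  intros Hu. pose proof (frac_part_bounds a). pose proof (Rplus_Int_part_frac_part a).
  destruct (Rle_dec u (frac_part a)).
  - apply (Int_frac_part_of_decomp _ (Int_part a + n)); [lra|rewrite plus_IZR; lra].
  - apply (Int_frac_part_of_decomp _ (Int_part a + n - 1)); [lra|].
    rewrite minus_IZR, plus_IZR. lra.
Qed.

Lemma Int_part_shift a n u :
  0 <= u < 1 ->
  Int_part (a + (IZR n - u)) = (Int_part a + n - if Rle_dec u (frac_part a) then 0 else 1)%Z.
Proof.
  intros Hu. pose proof (frac_part_bounds a). pose proof (Rplus_Int_part_frac_part a).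
  destruct (Rle_dec u (frac_part a));
    [apply (Int_frac_part_of_decomp _ _ (frac_part a - u))
    |apply (Int_frac_part_of_decomp _ _ (frac_part a - u + 1))];
    rewrite ?minus_IZR, ?plus_IZR; simpl; lra.
Qed.

Lemma region_eq_shift a b n u w :
  0 <= u < 1 -> 0 <= w < 1 -> region_eq a b -> cmp_agree (frac_part a) u (frac_part b) w ->
  region_eq (a + (IZR n - u)) (b + (IZR n - w)).
Proof.
  intros Hu Hw [Eint Efrac] [Hle Hge].
  pose proof (frac_part_bounds a). pose proof (frac_part_bounds b).
  unfold region_eq. rewrite !Int_part_shift, !frac_part_shift, Eint by assumption.
  destruct (Rle_dec u (frac_part a)) as [ha|ha], (Rle_dec w (frac_part b)) as [hb|hb];
    try tauto; split; try reflexivity.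
  - destruct (Rle_dec (frac_part a) u) as [h|h];
      [pose proof (proj1 Hle h) | assert (~ frac_part b <= w) by tauto];
      split; intro; lra.
  - split; intro; lra.
Qed.

Lemma frac_order_shift a a' b b' n u w :
  0 <= u < 1 -> 0 <= w < 1 ->
  (frac_part a <= frac_part a' <-> frac_part b <= frac_part b') ->
  cmp_agree (frac_part a) u (frac_part b) w -> cmp_agree (frac_part a') u (frac_part b') w ->
  (frac_part (a + (IZR n - u)) <= frac_part (a' + (IZR n - u)) <->
   frac_part (b + (IZR n - w)) <= frac_part (b' + (IZR n - w))).
Proof.
  intros Hu Hw Hord [_ Ha] [_ Ha'].
  pose proof (frac_part_bounds a). pose proof (frac_part_bounds b).
  pose proof (frac_part_bounds a'). pose proof (frac_part_bounds b').
  rewrite !frac_part_shift by assumption.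
  destruct (Rle_dec (frac_part a) (frac_part a')) as [h|h];
    [pose proof (proj1 Hord h) | assert (~ frac_part b <= frac_part b') by tauto].
  all: destruct (Rle_dec u (frac_part a)), (Rle_dec w (frac_part b)),
         (Rle_dec u (frac_part a')), (Rle_dec w (frac_part b')); try tauto;
       split; intro; lra.
Qed.

Lemma sub_int_cmp_agree (P : Z -> Prop) r1 t1 r2 t2 :
  region_eq r1 r2 -> region_eq t1 t2 ->
  cmp_agree (frac_part r1) (frac_part t1) (frac_part r2) (frac_part t2) ->
  int_cmp_agree P (r1 - t1) (r2 - t2).
Proof.
  intros [Er _] [Et _] [Hle Hge] z _.
  pose proof (frac_part_bounds r1). pose proof (frac_part_bounds r2).
  pose proof (frac_part_bounds t1). pose proof (frac_part_bounds t2).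
  set (k := (Int_part r1 - Int_part t1)%Z).
  assert (D1 : r1 - t1 = IZR k + (frac_part r1 - frac_part t1)).
  { rewrite (Rplus_Int_part_frac_part r1), (Rplus_Int_part_frac_part t1) at 1.
    unfold k. rewrite minus_IZR. ring. }
  assert (D2 : r2 - t2 = IZR k + (frac_part r2 - frac_part t2)).
  { rewrite (Rplus_Int_part_frac_part r2), (Rplus_Int_part_frac_part t2) at 1.
    unfold k. rewrite Er, Et, minus_IZR. ring. }
  rewrite D1, D2.
  destruct (Z.lt_trichotomy k z) as [Hk|[<-|Hk]].
  - assert (IZR k + 1 <= IZR z) by (rewrite <- plus_IZR; apply IZR_le; lia).
    split; split; intro; lra.
  - destruct (Rle_dec (frac_part r1) (frac_part t1)) as [h|h];
      [pose proof (proj1 Hle h) | assert (~ frac_part r2 <= frac_part t2) by tauto].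
    all: destruct (Rle_dec (frac_part t1) (frac_part r1)) as [h'|h'];
      [pose proof (proj1 Hge h') | assert (~ frac_part t2 <= frac_part r2) by tauto].
    all: split; split; intro; lra.
  - assert (IZR z + 1 <= IZR k) by (rewrite <- plus_IZR; apply IZR_le; lia).
    split; split; intro; lra.
Qed.

Lemma exists_between (A B : list R) :
  (forall a b, In a A -> In b B -> a < b) ->
  exists w, (forall a, In a A -> a < w) /\ (forall b, In b B -> w < b).
Proof.
  intros H. destruct A as [|a0 A0].
  - exists (MinRlist B - 1). split; [contradiction|].
    intros b Hb. pose proof (MinRlist_P1 B b Hb). lra.
  - set (m := MaxRlist (a0 :: A0)).
    assert (Hm : In m (a0 :: A0)) by (apply MaxRlist_P2; exists a0; left; reflexivity).
    set (gap := MinRlist (1 :: map (fun b => b - m) B)).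
    assert (Hgap : 0 < gap).
    { apply MinRlist_P2. intros y [<-|Hy]; [lra|].
      apply in_map_iff in Hy as [b [<- Hb]]. pose proof (H m b Hm Hb). lra. }
    exists (m + gap / 2). split.
    + intros a Ha. pose proof (MaxRlist_P1 _ a Ha) as Hle. fold m in Hle. lra.
    + intros b Hb.
      assert (gap <= b - m) by (apply MinRlist_P1; right; apply (in_map (fun b => b - m)), Hb).
      lra.
Qed.

Lemma order_iso_extend (l : list (R * R)) :
  (forall p q, In p l -> In q l -> (fst p <= fst q <-> snd p <= snd q)) ->
  forall u, exists w, forall p, In p l -> cmp_agree (fst p) u (snd p) w.
Proof.
  intros Hiso u.
  destruct (classic (exists p, In p l /\ fst p = u)) as [[p0 [Hp0 <-]]|Hnone].
  { exists (snd p0). intros p Hp. split; apply Hiso; assumption. }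
  set (below := flat_map (fun p => if Rlt_dec (fst p) u then snd p :: nil else nil) l).
  set (above := flat_map (fun p => if Rlt_dec u (fst p) then snd p :: nil else nil) l).
  assert (Hbelow : forall p, In p l -> fst p < u -> In (snd p) below).
  { intros p Hp Hlt. apply in_flat_map. exists p.
    destruct (Rlt_dec (fst p) u); [now split; [|left]|contradiction]. }
  assert (Habove : forall p, In p l -> u < fst p -> In (snd p) above).
  { intros p Hp Hlt. apply in_flat_map. exists p.
    destruct (Rlt_dec u (fst p)); [now split; [|left]|contradiction]. }
  assert (Hsep : forall a b, In a below -> In b above -> a < b).
  { intros a b Ha Hb.
    apply in_flat_map in Ha as [p [Hp Ha]]. apply in_flat_map in Hb as [q [Hq Hb]].
    destruct (Rlt_dec (fst p) u); [|contradiction]. destruct (Rlt_dec u (fst q)); [|contradiction].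
    destruct Ha as [<-|[]], Hb as [<-|[]].
    destruct (Rle_dec (snd q) (snd p)) as [h|h]; [apply (Hiso q p Hq Hp) in h|]; lra. }
  destruct (exists_between below above Hsep) as [w [Hw_below Hw_above]].
  exists w. intros p Hp.
  destruct (Rtotal_order (fst p) u) as [h|[h|h]].
  - pose proof (Hw_below _ (Hbelow p Hp h)). split; split; intro; lra.
  - exfalso. apply Hnone. eauto.
  - pose proof (Hw_above _ (Habove p Hp h)). split; split; intro; lra.
Qed.

Lemma ecmp_Fin s r t : ecmp s (Fin r) (Fin t) <-> (if s then r < t else r <= t).
Proof.
  destruct s; simpl; unfold elt, ele; [|reflexivity].
  split.
  - intros [Hle Hne]. destruct (Req_dec r t) as [->|]; [contradiction|lra].
  - intros Hlt. split; [lra|intros [= ->]; lra].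
Qed.

Lemma ecmp_lt_PInf e : ecmp true e PInf <-> e <> PInf.
Proof. destruct e; simpl; unfold elt, ele; intuition discriminate. Qed.

Lemma ecmp_le_NInf e : ecmp false e NInf <-> e = NInf.
Proof. destruct e; simpl; intuition discriminate. Qed.

Lemma ecmp_bnd_of_int_cmp (P : Z -> Prop) r1 r2 :
  int_cmp_agree P r1 r2 ->
  forall s c, (match c with BZ z => P z | _ => True end) ->
  (ecmp s (Fin r1) (bnd_ER c) <-> ecmp s (Fin r2) (bnd_ER c)).
Proof.
  intros H s [z| |] Hc; simpl.
  - rewrite !ecmp_Fin. destruct (H z Hc). destruct s; assumption.
  - destruct s; simpl; unfold elt, ele; intuition discriminate.
  - destruct s; simpl; unfold elt, ele; tauto.
Qed.

Lemma IZR_le_INR M z : (z <= Z.of_nat M)%Z -> IZR z <= INR M.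
Proof. intros Hz. rewrite INR_IZR_INZ. apply IZR_le, Hz. Qed.

Lemma IZR_abs_le_INR M z : (Z.abs z <= Z.of_nat M)%Z -> - INR M <= IZR z <= INR M.
Proof. intros Hz. rewrite INR_IZR_INZ, <- opp_IZR. split; apply IZR_le; lia. Qed.

Definition clock_equiv (M : nat) (e1 e2 : ER) : Prop :=
  match e1, e2 with
  | PInf, PInf | NInf, NInf => True
  | Fin r, Fin s => (INR M < r /\ INR M < s) \/ (r <= INR M /\ region_eq r s)
  | _, _ => False
  end.

Lemma clock_equiv_of_region_eq M r s : region_eq r s -> clock_equiv M (Fin r) (Fin s).
Proof.
  intros Hreg. simpl. rewrite INR_IZR_INZ.
  destruct (region_eq_int_cmp (fun _ => True) r s Hreg (Z.of_nat M) I) as [Hle _].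
  destruct (Rle_dec r (IZR (Z.of_nat M))) as [h|h]; [right; auto|left].
  assert (~ s <= IZR (Z.of_nat M)) by tauto. lra.
Qed.

Lemma clock_equiv_le_INR M r s : clock_equiv M (Fin r) (Fin s) -> (r <= INR M <-> s <= INR M).
Proof.
  intros [[Hr Hs]|[_ Hreg]]; [split; intro; lra|].
  rewrite INR_IZR_INZ. apply (region_eq_int_cmp (fun _ => True) _ _ Hreg _ I).
Qed.

Lemma clock_equiv_bnd_le M e1 e2 :
  clock_equiv M e1 e2 ->
  forall s c, bnd_le_M M c -> (ecmp s e1 (bnd_ER c) <-> ecmp s e2 (bnd_ER c)).
Proof.
  destruct e1 as [r| |], e2 as [t| |]; simpl; try contradiction; try reflexivity.
  intros Heq. apply (ecmp_bnd_of_int_cmp (fun z => (z <= Z.of_nat M)%Z)).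
  intros z Hz. pose proof (IZR_le_INR M z Hz).
  destruct Heq as [[Hr Ht]|[_ Hreg]]; [split; split; intro; lra|].
  exact (region_eq_int_cmp (fun z => (z <= Z.of_nat M)%Z) r t Hreg z Hz).
Qed.

Lemma clock_equiv_of_bnd_le M e1 e2 :
  (forall s c, bnd_le_M M c -> (ecmp s e1 (bnd_ER c) <-> ecmp s e2 (bnd_ER c))) ->
  clock_equiv M e1 e2.
Proof.
  intros H.
  pose proof (H true BPInf I) as HP. pose proof (H false BNInf I) as HN.
  simpl in HP, HN. rewrite !ecmp_lt_PInf in HP. rewrite !ecmp_le_NInf in HN.
  destruct e1 as [r| |], e2 as [t| |]; simpl; intuition try discriminate.
  assert (Hcmp : int_cmp_agree (fun z => (z <= Z.of_nat M)%Z) r t).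
  { intros z Hz. pose proof (H false (BZ z) Hz) as Hle. pose proof (H true (BZ z) Hz) as Hlt.
    cbn [bnd_ER] in Hle, Hlt. rewrite !ecmp_Fin in Hle, Hlt. split; assumption. }
  rewrite INR_IZR_INZ.
  destruct (Rle_dec r (IZR (Z.of_nat M))) as [h|h].
  - right. split; [exact h|]. apply (region_eq_of_int_cmp (Z.of_nat M)); assumption.
  - left. destruct (Hcmp (Z.of_nat M) (Z.le_refl _)) as [Hle _].
    assert (~ t <= IZR (Z.of_nat M)) by tauto. lra.
Qed.

Definition diff_equiv (M : nat) (e1 f1 e2 f2 : ER) : Prop :=
  forall s c, bnd_abs_le_M M c ->
    (ecmp s (esub e1 f1) (bnd_ER c) <-> ecmp s (esub e2 f2) (bnd_ER c)).

Lemma diff_equiv_Fin M r1 t1 r2 t2 :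
  int_cmp_agree (fun z => (Z.abs z <= Z.of_nat M)%Z) (r1 - t1) (r2 - t2) ->
  diff_equiv M (Fin r1) (Fin t1) (Fin r2) (Fin t2).
Proof. exact (ecmp_bnd_of_int_cmp _ (r1 - t1) (r2 - t2)). Qed.

Lemma diff_equiv_self M e1 e2 : clock_equiv M e1 e2 -> diff_equiv M e1 e1 e2 e2.
Proof.
  destruct e1 as [r| |], e2 as [t| |]; simpl; try contradiction; intros _ s c _; try reflexivity.
  unfold esub. cbn [eadd eopp]. rewrite !Rplus_opp_r. reflexivity.
Qed.

Lemma diff_equiv_zero_r M e1 e2 : clock_equiv M e1 e2 -> diff_equiv M e1 (Fin 0) e2 (Fin 0).
Proof.
  destruct e1 as [r| |], e2 as [t| |]; simpl; try contradiction; try (intros _ s c _; reflexivity).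
  intros Heq. apply diff_equiv_Fin. rewrite !Rminus_0_r. intros z Hz.
  pose proof (IZR_abs_le_INR M z Hz).
  destruct Heq as [[Hr Ht]|[_ Hreg]]; [split; split; intro; lra|].
  exact (region_eq_int_cmp (fun z => (Z.abs z <= Z.of_nat M)%Z) r t Hreg z Hz).
Qed.

Lemma diff_equiv_zero_l M e1 e2 : clock_equiv M e1 e2 -> diff_equiv M (Fin 0) e1 (Fin 0) e2.
Proof.
  destruct e1 as [r| |], e2 as [t| |]; simpl; try contradiction; try (intros _ s c _; reflexivity).
  intros Heq. apply diff_equiv_Fin. rewrite !Rminus_0_l.
  destruct Heq as [[Hr Ht]|[_ Hreg]].
  - intros z Hz. pose proof (IZR_abs_le_INR M z Hz). split; split; intro; lra.
  - apply int_cmp_agree_opp, region_eq_int_cmp, Hreg.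
Qed.

Section ReleasedClock.
Variables (M : nat) (r s : R) (e1 e2 : ER).
Hypotheses (Hreg : region_eq r s) (Hr : r <= 0) (Heq : clock_equiv M e1 e2).
Hypothesis Hfrac : forall t1 t2, e1 = Fin t1 -> e2 = Fin t2 -> t1 <= INR M ->
  cmp_agree (frac_part r) (frac_part t1) (frac_part s) (frac_part t2).

Lemma region_eq_nonpos : s <= 0.
Proof. exact (proj1 (proj1 (region_eq_int_cmp (fun _ => True) r s Hreg 0%Z I)) Hr). Qed.

Lemma diff_equiv_nonpos_l : diff_equiv M (Fin r) e1 (Fin s) e2.
Proof.
  pose proof region_eq_nonpos.
  destruct e1 as [t1| |], e2 as [t2| |]; simpl in Heq; try contradiction;
    try (intros sb c _; reflexivity).
  apply diff_equiv_Fin. destruct Heq as [[Ht1 Ht2]|[Ht1 Hreg_t]].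
  - intros z Hz. pose proof (IZR_abs_le_INR M z Hz). split; split; intro; lra.
  - apply sub_int_cmp_agree; auto.
Qed.

Lemma diff_equiv_nonpos_r : diff_equiv M e1 (Fin r) e2 (Fin s).
Proof.
  pose proof region_eq_nonpos.
  destruct e1 as [t1| |], e2 as [t2| |]; simpl in Heq; try contradiction;
    try (intros sb c _; reflexivity).
  apply diff_equiv_Fin. destruct Heq as [[Ht1 Ht2]|[Ht1 Hreg_t]].
  - intros z Hz. pose proof (IZR_abs_le_INR M z Hz). split; split; intro; lra.
  - apply sub_int_cmp_agree, cmp_agree_swap; auto.
Qed.

End ReleasedClock.

Lemma diff_equiv_NInf_l M e1 e2 : clock_equiv M e1 e2 -> diff_equiv M NInf e1 NInf e2.
Proof. destruct e1, e2; simpl; try contradiction; intros _ s c _; reflexivity. Qed.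

Lemma diff_equiv_NInf_r M e1 e2 : clock_equiv M e1 e2 -> diff_equiv M e1 NInf e2 NInf.
Proof. destruct e1, e2; simpl; try contradiction; intros _ s c _; reflexivity. Qed.

Section Equivalence.
Variables (C : Type) (M : nat).

Definition frac_order_agree (v1 v2 : valuation C) : Prop :=
  forall (x y : option C) (r1 r2 s1 s2 : R),
    val C v1 x = Fin r1 -> val C v1 y = Fin r2 -> r1 <= INR M -> r2 <= INR M ->
    val C v2 x = Fin s1 -> val C v2 y = Fin s2 ->
    (frac_part r1 <= frac_part r2 <-> frac_part s1 <= frac_part s2).

Lemma approxM_clock_equiv (v1 v2 : valuation C) :
  approxM M v1 v2 -> forall x, clock_equiv M (val C v1 x) (val C v2 x).
Proof. intros [H _] x. apply clock_equiv_of_bnd_le, H. Qed.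

Lemma approxM_diff_equiv (v1 v2 : valuation C) :
  approxM M v1 v2 -> forall x y, diff_equiv M (v1 x) (v1 y) (v2 x) (v2 y).
Proof. intros [_ [H _]] x y. exact (H (Some x) (Some y)). Qed.

Lemma approxM_frac_order_agree (v1 v2 : valuation C) : approxM M v1 v2 -> frac_order_agree v1 v2.
Proof. intros [_ [_ H]]. exact H. Qed.

Lemma approxM_intro (v1 v2 : valuation C) :
  (forall x, clock_equiv M (val C v1 x) (val C v2 x)) ->
  (forall x y, diff_equiv M (v1 x) (v1 y) (v2 x) (v2 y)) ->
  frac_order_agree v1 v2 -> approxM M v1 v2.
Proof.
  intros Hclock Hdiff Hfrac. split; [|split; [|exact Hfrac]].
  - intros x. apply clock_equiv_bnd_le, Hclock.
  - intros [x|] [y|].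
    + apply Hdiff.
    + apply (diff_equiv_zero_r M _ _ (Hclock (Some x))).
    + apply (diff_equiv_zero_l M _ _ (Hclock (Some y))).
    + intros s c _. reflexivity.
Qed.

Lemma approxM_sym (v1 v2 : valuation C) : approxM M v1 v2 -> approxM M v2 v1.
Proof.
  intros H. pose proof (approxM_clock_equiv _ _ H) as Hclock.
  destruct H as [H1 [H2 H3]]. split; [|split].
  - intros x s c Hc. symmetry. apply H1, Hc.
  - intros x y s c Hc. symmetry. apply H2, Hc.
  - intros x y r1 r2 s1 s2 E1 E2 L1 L2 F1 F2.
    pose proof (Hclock x) as Hx. pose proof (Hclock y) as Hy.
    rewrite E1, F1 in Hx. rewrite E2, F2 in Hy.
    symmetry. apply (H3 x y); auto.
    + apply (clock_equiv_le_INR M _ _ Hx), L1.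
    + apply (clock_equiv_le_INR M _ _ Hy), L2.
Qed.

Lemma future_valid_iff e : (e = NInf \/ exists r, e = Fin r /\ r <= 0) <-> ele e (Fin 0).
Proof.
  destruct e as [r| |]; simpl; split.
  - intros [[=]|[r' [[= ->] Hr]]]. exact Hr.
  - intros Hr. right. exists r. auto.
  - intros [[=]|[r' [[=] _]]].
  - contradiction.
  - auto.
  - auto.
Qed.

Lemma history_valid_iff e : (e = PInf \/ exists r, e = Fin r /\ 0 <= r) <-> ~ elt e (Fin 0).
Proof.
  unfold elt. destruct e as [r| |]; simpl; split.
  - intros [[=]|[r' [[= ->] Hr]]] [Hle Hne]. destruct (Req_dec r' 0) as [->|]; [contradiction|lra].
  - intros Hnlt. right. exists r. split; [reflexivity|].
    destruct (Rle_dec 0 r) as [h|h]; [exact h|]. exfalso. apply Hnlt. split; [lra|intros [=]; lra].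
  - intros _ [[] _].
  - auto.
  - intros [[=]|[r' [[=] _]]].
  - intros Hn. exfalso. apply Hn. split; [exact I|discriminate].
Qed.

Lemma is_valuation_approxM (isF : C -> bool) (v1 v2 : valuation C) :
  is_valuation C isF v1 -> approxM M v1 v2 -> is_valuation C isF v2.
Proof.
  intros Hv [H _] x. specialize (Hv x).
  assert (H0 : bnd_le_M M (BZ 0)) by (simpl; lia).
  pose proof (H (Some x) false (BZ 0) H0) as Hle. pose proof (H (Some x) true (BZ 0) H0) as Hlt.
  simpl in Hle, Hlt. destruct (isF x).
  - rewrite future_valid_iff in *. tauto.
  - rewrite history_valid_iff in *. tauto.
Qed.

End Equivalence.

Lemma clock_equiv_Fin0 M e : clock_equiv M (Fin 0) e -> e = Fin 0.
Proof.
  destruct e as [t| |]; simpl; try contradiction.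
  intros [[H _]|[_ [Eint Efrac]]]; [pose proof (pos_INR M); lra|].
  assert (Hint0 : Int_part 0 = 0%Z) by (apply (Int_frac_part_of_decomp 0 0 0); simpl; lra).
  rewrite Hint0 in Eint. rewrite fp_R0 in Efrac.
  rewrite (Rplus_Int_part_frac_part t), <- Eint, (proj1 Efrac eq_refl). f_equal. simpl. ring.
Qed.

Lemma eadd_Fin_inv e d r : eadd e (Fin d) = Fin r -> exists a, e = Fin a /\ r = a + d.
Proof. destruct e as [a| |]; simpl; intros [=]; eauto. Qed.

Lemma esub_eadd_Fin a b d : esub (eadd a (Fin d)) (eadd b (Fin d)) = esub a b.
Proof. destruct a, b; simpl; try reflexivity. f_equal. ring. Qed.

Lemma clock_equiv_delay M e1 e2 n u w :
  0 <= u < 1 -> 0 <= w < 1 -> 0 <= IZR n - u -> 0 <= IZR n - w -> clock_equiv M e1 e2 ->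
  (forall r s, e1 = Fin r -> e2 = Fin s -> r <= INR M ->
     cmp_agree (frac_part r) u (frac_part s) w) ->
  clock_equiv M (eadd e1 (Fin (IZR n - u))) (eadd e2 (Fin (IZR n - w))).
Proof.
  intros Hu Hw Hdu Hdw Heq Hcmp.
  destruct e1 as [r| |], e2 as [s| |]; simpl in Heq; try contradiction; cbn [eadd]; try exact I.
  destruct Heq as [[Hr Hs]|[Hr Hreg]].
  - left. lra.
  - apply clock_equiv_of_region_eq, region_eq_shift; auto.
Qed.

Definition upd {C : Type} (v : valuation C) (x : C) (a : ER) : valuation C :=
  fun y => if excluded_middle_informative (y = x) then a else v y.

Lemma upd_same {C : Type} (v : valuation C) x a : upd v x a x = a.
Proof. unfold upd. destruct (excluded_middle_informative (x = x)); congruence. Qed.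

Lemma upd_other {C : Type} (v : valuation C) x a y : y <> x -> upd v x a y = v y.
Proof. unfold upd. destruct (excluded_middle_informative (y = x)); congruence. Qed.

Lemma val_upd_other {C : Type} (v : valuation C) x a y :
  y <> Some x -> val C (upd v x a) y = val C v y.
Proof. destruct y as [y|]; simpl; [|reflexivity]. intros Hy. apply upd_other. congruence. Qed.

Section Simulation.
Variables (C : Type) (M : nat).
Hypothesis Cfin : exists l : list C, forall x : C, In x l.

Definition small_frac_pairs (v1 v2 : valuation C) (xs : list (option C)) : list (R * R) :=
  (1, 1) :: flat_map (fun x =>
    match val C v1 x, val C v2 x with
    | Fin r, Fin s => if Rle_dec r (INR M) then (frac_part r, frac_part s) :: nil else nil
    | _, _ => nil
    end) xs.

Lemma in_small_frac_pairs (v1 v2 : valuation C) xs p :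
  In p (small_frac_pairs v1 v2 xs) <->
  p = (1, 1) \/ exists x r s, In x xs /\ val C v1 x = Fin r /\ r <= INR M /\
                              val C v2 x = Fin s /\ p = (frac_part r, frac_part s).
Proof.
  unfold small_frac_pairs. cbn [In]. rewrite in_flat_map. split.
  - intros [<-|[x [Hx Hp]]]; [now left|right].
    destruct (val C v1 x) as [r| |] eqn:E1, (val C v2 x) as [s| |] eqn:E2; try contradiction.
    destruct (Rle_dec r (INR M)); [|contradiction].
    destruct Hp as [<-|[]]. exists x, r, s. auto.
  - intros [->|[x [r [s [Hx [E1 [Hr [E2 ->]]]]]]]]; [now left|right].
    exists x. split; [exact Hx|]. rewrite E1, E2.
    destruct (Rle_dec r (INR M)); [now left|contradiction].
Qed.

Lemma frac_point_extend (v1 v2 : valuation C) :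
  frac_order_agree C M v1 v2 -> forall u, 0 <= u < 1 ->
  exists w, 0 <= w < 1 /\
    forall x r s, val C v1 x = Fin r -> r <= INR M -> val C v2 x = Fin s ->
      cmp_agree (frac_part r) u (frac_part s) w.
Proof.
  intros Hfrac u Hu. destruct Cfin as [l Hl].
  set (L := small_frac_pairs v1 v2 (None :: map Some l)).
  assert (HinL : forall x r s, val C v1 x = Fin r -> r <= INR M -> val C v2 x = Fin s ->
                   In (frac_part r, frac_part s) L).
  { intros x r s E1 Hr E2. apply in_small_frac_pairs. right. exists x, r, s.
    repeat split; auto. destruct x as [x|]; [right; apply in_map, Hl|now left]. }
  assert (Hiso : forall p q, In p L -> In q L -> (fst p <= fst q <-> snd p <= snd q)).
  { intros p q Hp Hq.
    apply in_small_frac_pairs in Hp as [->|[x [r1 [s1 [_ [E1 [L1 [F1 ->]]]]]]]];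
    apply in_small_frac_pairs in Hq as [->|[y [r2 [s2 [_ [E2 [L2 [F2 ->]]]]]]]]; simpl.
    - reflexivity.
    - pose proof (frac_part_bounds r2). pose proof (frac_part_bounds s2). split; intro; lra.
    - pose proof (frac_part_bounds r1). pose proof (frac_part_bounds s1). split; intro; lra.
    - exact (Hfrac x y r1 r2 s1 s2 E1 E2 L1 L2 F1 F2). }
  destruct (order_iso_extend L Hiso u) as [w Hw].
  destruct (Hw (1, 1) (or_introl eq_refl)) as [H1 _].
  destruct (Hw _ (HinL None 0 0 eq_refl (pos_INR M) eq_refl)) as [H0 _].
  simpl in H0, H1. rewrite fp_R0 in H0.
  exists w. split; [split|].
  - apply H0. lra.
  - destruct (Rlt_dec w 1) as [h|h]; [exact h|]. assert (1 <= u) by (apply H1; lra). lra.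
  - intros x r s E1 Hr E2. exact (Hw _ (HinL x r s E1 Hr E2)).
Qed.

Lemma frac_order_agree_delay (v1 v2 : valuation C) n u w :
  0 <= u < 1 -> 0 <= w < 1 -> 0 <= IZR n - u ->
  (forall x, clock_equiv M (val C (delay C v1 (IZR n - u)) x) (val C (delay C v2 (IZR n - w)) x)) ->
  frac_order_agree C M v1 v2 ->
  (forall x r s, val C v1 x = Fin r -> r <= INR M -> val C v2 x = Fin s ->
     cmp_agree (frac_part r) u (frac_part s) w) ->
  frac_order_agree C M (delay C v1 (IZR n - u)) (delay C v2 (IZR n - w)).
Proof.
  intros Hu Hw Hd Hclock Hfrac Hcmp.
  assert (Hzero : forall x r s, val C (delay C v1 (IZR n - u)) x = Fin r -> r <= INR M ->
            val C (delay C v2 (IZR n - w)) x = Fin s ->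
            cmp_agree 0 (frac_part r) 0 (frac_part s)).
  { intros x r s E1 Hr E2. pose proof (Hclock x) as Hx. rewrite E1, E2 in Hx.
    destruct Hx as [[Hr' _]|[_ [_ Hz]]]; [lra|].
    pose proof (frac_part_bounds r). pose proof (frac_part_bounds s).
    destruct (Req_dec (frac_part r) 0) as [h|h];
      [pose proof (proj1 Hz h) | assert (frac_part s <> 0) by tauto];
      split; split; intro; lra. }
  intros [x|] [y|] r1 r2 s1 s2 E1 E2 L1 L2 F1 F2.
  - cbn [val] in E1, E2, F1, F2. unfold delay in E1, E2, F1, F2.
    apply eadd_Fin_inv in E1 as [a [Ea ->]], E2 as [a' [Ea' ->]],
      F1 as [b [Eb ->]], F2 as [b' [Eb' ->]].
    apply frac_order_shift; auto.
    + apply (Hfrac (Some x) (Some y)); simpl; auto; lra.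
    + apply (Hcmp (Some x)); simpl; auto; lra.
    + apply (Hcmp (Some y)); simpl; auto; lra.
  - simpl in E2, F2. injection E2 as <-. injection F2 as <-. rewrite fp_R0.
    exact (proj2 (Hzero (Some x) r1 s1 E1 L1 F1)).
  - simpl in E1, F1. injection E1 as <-. injection F1 as <-. rewrite fp_R0.
    exact (proj1 (Hzero (Some y) r2 s2 E2 L2 F2)).
  - simpl in E1, E2, F1, F2.
    injection E1 as <-. injection E2 as <-. injection F1 as <-. injection F2 as <-. reflexivity.
Qed.

(** Write [d1 = n - u] with [n] an integer and [u] in [0, 1), and delay [v2] by [n - w],
    where [w] sits among the fractional parts of [v2] as [u] does among those of [v1]. *)
Lemma approxM_delay (v1 v2 : valuation C) d1 :
  approxM M v1 v2 -> 0 <= d1 ->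
  exists d2, 0 <= d2 /\ approxM M (delay C v1 d1) (delay C v2 d2).
Proof.
  intros H Hd1.
  set (n := (- Int_part (- d1))%Z). set (u := frac_part (- d1)).
  assert (Ed1 : d1 = IZR n - u).
  { pose proof (Rplus_Int_part_frac_part (- d1)). unfold n, u. rewrite opp_IZR. lra. }
  assert (Hu : 0 <= u < 1) by apply frac_part_bounds.
  destruct (frac_point_extend v1 v2 (approxM_frac_order_agree _ _ _ _ H) u Hu)
    as [w [Hw Hcmp]].
  assert (Hd2 : 0 <= IZR n - w).
  { destruct (Hcmp None 0 0 eq_refl (pos_INR M) eq_refl) as [_ Hz]. rewrite fp_R0 in Hz.
    destruct (Req_dec u 0) as [Hu0|Hu0].
    - assert (w <= 0) by (apply Hz; lra). lra.
    - assert (Hn : (0 < n)%Z) by (apply lt_IZR; lra).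
      assert (1 <= IZR n) by (apply (IZR_le 1); lia). lra. }
  assert (Hclock : forall x, clock_equiv M (val C (delay C v1 (IZR n - u)) x)
                                           (val C (delay C v2 (IZR n - w)) x)).
  { intros [x|]; cbn [val].
    - apply clock_equiv_delay; auto; [lra|apply (approxM_clock_equiv _ _ _ _ H (Some x))|].
      intros r s E1 E2 Hr. exact (Hcmp (Some x) r s E1 Hr E2).
    - apply clock_equiv_of_region_eq, region_eq_refl. }
  exists (IZR n - w). split; [exact Hd2|]. rewrite Ed1.
  apply approxM_intro; [exact Hclock| |].
  - intros x y s c Hc. unfold delay. rewrite !esub_eadd_Fin.
    exact (approxM_diff_equiv _ _ _ _ H x y s c Hc).
  - apply frac_order_agree_delay; auto; [lra|apply approxM_frac_order_agree, H].
Qed.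

Lemma approxM_upd (v1 v2 : valuation C) x a b :
  approxM M v1 v2 -> clock_equiv M a b ->
  (forall y, diff_equiv M a (v1 y) b (v2 y) /\ diff_equiv M (v1 y) a (v2 y) b) ->
  (forall y r s t1 t2, a = Fin r -> b = Fin s -> val C v1 y = Fin t1 -> t1 <= INR M ->
     val C v2 y = Fin t2 -> cmp_agree (frac_part r) (frac_part t1) (frac_part s) (frac_part t2)) ->
  approxM M (upd v1 x a) (upd v2 x b).
Proof.
  intros H Hab Hdiff Hcmp. apply approxM_intro.
  - intros y. destruct (classic (y = Some x)) as [->|Hy].
    + simpl. rewrite !upd_same. exact Hab.
    + rewrite !val_upd_other by exact Hy. apply approxM_clock_equiv, H.
  - intros y z.
    destruct (classic (y = x)) as [->|Hy], (classic (z = x)) as [->|Hz];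
      rewrite ?upd_same, ?upd_other by assumption.
    + apply diff_equiv_self, Hab.
    + apply Hdiff.
    + apply Hdiff.
    + apply approxM_diff_equiv, H.
  - intros y z r1 r2 s1 s2 E1 E2 L1 L2 F1 F2.
    destruct (classic (y = Some x)) as [->|Hy], (classic (z = Some x)) as [->|Hz];
      simpl in *; rewrite ?upd_same in *; rewrite ?val_upd_other in * by assumption.
    + rewrite E1 in E2. rewrite F1 in F2. injection E2 as <-. injection F2 as <-. split; intro; lra.
    + exact (proj1 (Hcmp z r1 s1 r2 s2 E1 F1 E2 L2 F2)).
    + exact (proj2 (Hcmp y r2 s2 r1 s1 E2 F2 E1 L1 F1)).
    + apply (approxM_frac_order_agree _ _ _ _ H y z); assumption.
Qed.

Lemma approxM_release (v1 v2 : valuation C) x a :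
  approxM M v1 v2 -> ele a (Fin 0) -> exists b, approxM M (upd v1 x a) (upd v2 x b).
Proof.
  intros H Ha. destruct a as [r| |]; simpl in Ha; [|contradiction|].
  - destruct (frac_point_extend v1 v2 (approxM_frac_order_agree _ _ _ _ H) (frac_part r)
                (frac_part_bounds r)) as [w [Hw Hcmp]].
    set (s := IZR (Int_part r) + w).
    destruct (Int_frac_part_of_decomp s (Int_part r) w Hw eq_refl) as [Es Fs].
    assert (Hreg : region_eq r s).
    { split; [congruence|]. rewrite Fs. pose proof (frac_part_bounds r).
      destruct (Hcmp None 0 0 eq_refl (pos_INR M) eq_refl) as [_ Hz]. rewrite fp_R0 in Hz.
      split; intro;
        [assert (w <= 0) by (apply Hz; lra) | assert (frac_part r <= 0) by (apply Hz; lra)];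
        lra. }
    assert (Hnew : forall y t1 t2, val C v1 y = Fin t1 -> t1 <= INR M -> val C v2 y = Fin t2 ->
                     cmp_agree (frac_part r) (frac_part t1) (frac_part s) (frac_part t2)).
    { intros y t1 t2 E1 Ht E2. rewrite Fs. apply cmp_agree_swap, (Hcmp y); assumption. }
    exists (Fin s). apply approxM_upd; [exact H|apply clock_equiv_of_region_eq, Hreg| |].
    + intros y. pose proof (approxM_clock_equiv _ _ _ _ H (Some y)) as Hy.
      split; [apply diff_equiv_nonpos_l|apply diff_equiv_nonpos_r]; auto;
        intros t1 t2 E1 E2 Ht; exact (Hnew (Some y) t1 t2 E1 Ht E2).
    + intros y r' s' t1 t2 [= <-] [= <-]. apply Hnew.
  - exists NInf. apply approxM_upd; [exact H|exact I| |intros y r' s' t1 t2 [=]].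
    intros y. pose proof (approxM_clock_equiv _ _ _ _ H (Some y)) as Hy.
    split; [apply diff_equiv_NInf_l|apply diff_equiv_NInf_r]; exact Hy.
Qed.

Lemma approxM_release_all (xs : list C) :
  forall u1 u2 w1 : valuation C, approxM M u1 u2 ->
  (forall y, ~ In y xs -> w1 y = u1 y) -> (forall y, In y xs -> ele (w1 y) (Fin 0)) ->
  exists w2, (forall y, ~ In y xs -> w2 y = u2 y) /\ approxM M w1 w2.
Proof.
  induction xs as [|x xs IH]; intros u1 u2 w1 H Hout Hin.
  - exists u2. split; [reflexivity|]. replace w1 with u1; [exact H|].
    apply functional_extensionality. intros y. symmetry. apply Hout. auto.
  - destruct (approxM_release u1 u2 x (w1 x) H (Hin x (or_introl eq_refl))) as [b Hb].
    destruct (IH (upd u1 x (w1 x)) (upd u2 x b) w1 Hb) as [w2 [Hw2 Happ]].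
    + intros y Hy. destruct (classic (y = x)) as [->|Hyx]; [now rewrite upd_same|].
      rewrite upd_other by exact Hyx. apply Hout. intros [->|Hy']; auto.
    + intros y Hy. apply Hin. right. exact Hy.
    + exists w2. split; [|exact Happ]. intros y Hy.
      rewrite Hw2 by (intro; apply Hy; right; assumption).
      apply upd_other. intros ->. apply Hy. now left.
Qed.

Lemma approxM_change (isF : C -> bool) (Rs : list C) (v1 v2 w1 : valuation C) :
  approxM M v1 v2 -> in_change C isF Rs v1 w1 ->
  exists w2, in_change C isF Rs v2 w2 /\ approxM M w1 w2.
Proof.
  intros H [Hw1 Hc].
  destruct (approxM_release_all Rs v1 v2 w1 H) as [w2 [Hout Happ]].
  - intros y Hy. apply (proj2 (Hc y)), Hy.
  - intros y Hy. specialize (Hw1 y). destruct (isF y) eqn:Ey.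
    + apply future_valid_iff, Hw1.
    + rewrite (proj1 (Hc y) Hy Ey). simpl. lra.
  - exists w2. split; [|exact Happ].
    split; [exact (is_valuation_approxM C M isF w1 w2 Hw1 Happ)|].
    intros y. split; [|apply Hout].
    intros Hy Ey. apply (clock_equiv_Fin0 M). rewrite <- (proj1 (Hc y) Hy Ey).
    exact (approxM_clock_equiv _ _ _ _ Happ (Some y)).
Qed.

Lemma approxM_sat (v1 v2 : valuation C) (g : guard C) :
  approxM M v1 v2 -> (forall a z, In a g -> ac a = BZ z -> (Z.abs z <= Z.of_nat M)%Z) ->
  sat C v1 g -> sat C v2 g.
Proof.
  intros [_ [Hdiff _]] Hg Hsat. unfold sat in *. rewrite Forall_forall in *. intros a Ha.
  assert (Hc : bnd_abs_le_M M (ac a))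
    by (destruct (ac a) eqn:Ec; simpl; [exact (Hg a z Ha Ec)|exact I|exact I]).
  exact (proj1 (Hdiff (ax a) (ay a) (astrict a) (ac a) Hc) (Hsat a Ha)).
Qed.

Lemma approxM_prog (isF : C -> bool) (p : program C) :
  (forall g a z, In (IGuard g) p -> In a g -> ac a = BZ z -> (Z.abs z <= Z.of_nat M)%Z) ->
  forall v1 v2 v1', approxM M v1 v2 -> prog_sem C isF p v1 v1' ->
  exists v2', prog_sem C isF p v2 v2' /\ approxM M v1' v2'.
Proof.
  induction p as [|[g|Rs] p IH]; intros Hg v1 v2 v1' H Hp; simpl in Hp.
  - subst v1'. exists v2. split; [reflexivity|exact H].
  - destruct Hp as [Hsat Hp].
    destruct (IH (fun g' a z Hin => Hg g' a z (or_intror Hin)) v1 v2 v1' H Hp)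
      as [v2' [Hp2 H']].
    exists v2'. split; [split; [|exact Hp2]|exact H'].
    apply (approxM_sat v1); [exact H| |exact Hsat].
    intros a z Ha Ez. exact (Hg g a z (or_introl eq_refl) Ha Ez).
  - destruct Hp as [w1 [Hc Hp]].
    destruct (approxM_change isF Rs v1 v2 w1 H Hc) as [w2 [Hc2 Hw]].
    destruct (IH (fun g' a z Hin => Hg g' a z (or_intror Hin)) w1 w2 v1' Hw Hp)
      as [v2' [Hp2 H']].
    exists v2'. split; [exists w2; split; assumption|exact H'].
Qed.

End Simulation.

Theorem lemma8 (Q Sigma C : Type) (isF : C -> bool)
  (Cfin : exists l : list C, forall x : C, In x l)
  (A : GTA Q Sigma C) (M : nat)
  (Hsafe : safe isF A) (HM : consts_bounded A M) :
  forall v1 v2 : valuation C,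
    is_valuation C isF v1 -> is_valuation C isF v2 -> approxM M v1 v2 ->
    (* (a) time elapse, both directions *)
    (forall d1 : R, 0 <= d1 -> is_valuation C isF (delay C v1 d1) ->
       exists d2 : R, 0 <= d2 /\ is_valuation C isF (delay C v2 d2) /\
                      approxM M (delay C v1 d1) (delay C v2 d2)) /\
    (forall d2 : R, 0 <= d2 -> is_valuation C isF (delay C v2 d2) ->
       exists d1 : R, 0 <= d1 /\ is_valuation C isF (delay C v1 d1) /\
                      approxM M (delay C v1 d1) (delay C v2 d2)) /\
    (* (b) discrete transitions, both directions *)
    (forall t, In t (gta_trans A) -> forall (q q' : Q) (v1' : valuation C),
       gstep isF t q v1 q' v1' ->
       exists v2', gstep isF t q v2 q' v2' /\ approxM M v1' v2') /\
    (forall t, In t (gta_trans A) -> forall (q q' : Q) (v2' : valuation C),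
       gstep isF t q v2 q' v2' ->
       exists v1', gstep isF t q v1 q' v1' /\ approxM M v1' v2').
Proof.
  intros v1 v2 _ _ H.
  pose proof (approxM_sym C M v1 v2 H) as Hsym.
  assert (Hguards : forall t, In t (gta_trans A) -> forall g a z, In (IGuard g) (tprog t) ->
                      In a g -> ac a = BZ z -> (Z.abs z <= Z.of_nat M)%Z).
  { intros t Ht g a z Hg Ha Ez. apply (HM g a z); [right; exists t|..]; auto. }
  split; [|split; [|split]].
  - intros d1 Hd1 Hv. destruct (approxM_delay C M Cfin v1 v2 d1 H Hd1) as [d2 [Hd2 Hd]].
    exists d2. split; [|split]; [exact Hd2|exact (is_valuation_approxM C M isF _ _ Hv Hd)|exact Hd].
  - intros d2 Hd2 Hv. destruct (approxM_delay C M Cfin v2 v1 d2 Hsym Hd2) as [d1 [Hd1 Hd]].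
    exists d1. split; [|split]; [exact Hd1|exact (is_valuation_approxM C M isF _ _ Hv Hd)|].
    apply approxM_sym, Hd.
  - intros t Ht q q' v1' [Hsrc [Htgt Hp]].
    destruct (approxM_prog C M Cfin isF (tprog t) (Hguards t Ht) v1 v2 v1' H Hp)
      as [v2' [Hp2 H']].
    exists v2'. split; [repeat split; assumption|exact H'].
  - intros t Ht q q' v2' [Hsrc [Htgt Hp]].
    destruct (approxM_prog C M Cfin isF (tprog t) (Hguards t Ht) v2 v1 v2' Hsym Hp)
      as [v1' [Hp1 H']].
    exists v1'. split; [repeat split; assumption|apply approxM_sym, H'].
Qed.
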